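(* Let $(\mathcal{H},d)$ be a Hadamard space, $X_1,\dots,X_n\in\mathcal{H}$, $C_n=\mathrm{conv}\{X_1,\dots,X_n\}$, and $y\in\mathbb{R}^n$. Then the domain of $\bar h_y$, $\{x\in\mathcal{H}:\bar h_y(x)>-\infty\}$, equals $\mathrm{cl}(C_n)$.
   Context: A Hadamard space is a complete CAT(0) geodesic metric space, with unique geodesics; $\mathcal{H}\times\mathbb{R}$ is again a Hadamard space. A set is convex if it contains the geodesic between any two of its points; $\mathrm{conv}$ denotes convex hull and $\mathrm{cl}$ closure. A function $g:\mathcal{H}\to[-\infty,\infty]$ is concave if its hypograph $\mathrm{hypo}\,g=\{(x,\mu):\mu\le g(x)\}$ is convex in $\mathcal{H}\times\mathbb{R}$. For $y=(y_1,\dots,y_n)\in\mathbb{R}^n$, define $f_y(x)=y_i$ if $x=X_i$ and $f_y(x)=-\infty$ otherwise. The upper-semicontinuous concave hull $\bar h_y$ of $f_y$ is the least upper-semicontinuous concave function $g$ with $g\ge f_y$ (i.e. $g(X_i)\ge y_i$ for all $i$); equivalently, $\mathrm{hypo}\,\bar h_y=\mathrm{cl}(\mathrm{conv}(\mathrm{hypo}\,f_y))$. *)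

From Stdlib Require Import Reals.
From Coquelicot Require Import Coquelicot.
Open Scope R_scope.

Section Metric.
Variable T : Type.
Variable d : T -> T -> R.

Definition is_metric : Prop :=
  (forall x y, 0 <= d x y) /\
  (forall x y, d x y = 0 <-> x = y) /\
  (forall x y, d x y = d y x) /\
  (forall x y z, d x z <= d x y + d y z).

Definition is_complete : Prop :=
  forall u : nat -> T,
    (forall eps, 0 < eps -> exists N, forall m k, (N <= m)%nat -> (N <= k)%nat ->
        d (u m) (u k) < eps) ->
    exists l, forall eps, 0 < eps -> exists N, forall k, (N <= k)%nat -> d (u k) l < eps.

Definition is_geodesic (x y : T) (g : R -> T) : Prop :=
  g 0 = x /\ g 1 = y /\
  forall s t, 0 <= s <= 1 -> 0 <= t <= 1 -> d (g s) (g t) = Rabs (s - t) * d x y.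

Definition is_geodesic_space : Prop :=
  forall x y, exists g, is_geodesic x y g.

Definition is_CAT0 : Prop :=
  forall x y z g t, is_geodesic x y g -> 0 <= t <= 1 ->
    (d z (g t)) ^ 2 <= (1 - t) * (d z x) ^ 2 + t * (d z y) ^ 2 - t * (1 - t) * (d x y) ^ 2.

Definition is_Hadamard : Prop :=
  is_metric /\ is_complete /\ is_geodesic_space /\ is_CAT0.

Definition convex (S : T -> Prop) : Prop :=
  forall x y g, S x -> S y -> is_geodesic x y g ->
    forall t, 0 <= t <= 1 -> S (g t).

Definition conv (A : T -> Prop) : T -> Prop :=
  fun x => forall S, convex S -> (forall z, A z -> S z) -> S x.

Definition cl (A : T -> Prop) : T -> Prop :=
  fun x => forall eps, 0 < eps -> exists z, A z /\ d x z < eps.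

Definition usc (g : T -> Rbar) : Prop :=
  forall x (c : R), Rbar_lt (g x) c ->
    exists delta, 0 < delta /\ forall z, d x z < delta -> Rbar_lt (g z) c.

End Metric.

Definition prod_dist {T : Type} (d : T -> T -> R) (p q : T * R) : R :=
  sqrt ((d (fst p) (fst q)) ^ 2 + (snd p - snd q) ^ 2).

Definition hypo {T : Type} (g : T -> Rbar) : T * R -> Prop :=
  fun p => Rbar_le (Finite (snd p)) (g (fst p)).

Definition concave {T : Type} (d : T -> T -> R) (g : T -> Rbar) : Prop :=
  convex (T * R) (prod_dist d) (hypo g).

Definition majorizes_fy {T : Type} (n : nat) (X : nat -> T) (y : nat -> R)
  (g : T -> Rbar) : Prop :=
  forall i, (i < n)%nat -> Rbar_le (Finite (y i)) (g (X i)).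

(* upper-semicontinuous concave hull of f_y: pointwise infimum of all usc
   concave g >= f_y (this is the least such function) *)
Definition hbar {T : Type} (d : T -> T -> R) (n : nat) (X : nat -> T)
  (y : nat -> R) (x : T) : Rbar :=
  Rbar_glb (fun v => exists g : T -> Rbar,
     usc T d g /\ concave d g /\ majorizes_fy n X y g /\ v = g x).

Definition pts {T : Type} (n : nat) (X : nat -> T) : T -> Prop :=
  fun z => exists i, (i < n)%nat /\ z = X i.

From Pilot Require Import Defs.
From Stdlib Require Import Reals Lra Psatz Classical ClassicalEpsilon.
From Coquelicot Require Import Coquelicot.
Open Scope R_scope.

(* If x lies outside cl(C_n), the function equal to +oo on cl(C_n) and -oo
   elsewhere is admissible: it is upper semicontinuous because the complement
   of a closure is open, and concave because cl(C_n) is convex (CAT(0)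
   comparison moves geodesics continuously with their endpoints) and because
   a geodesic of H x R projects onto points of H lying metrically between the
   projected endpoints, and such points lie on the geodesic of H.  Hence
   hbar_y(x) = -oo.  Conversely, for every admissible g and m = min y, the set
   {g >= m} is convex (horizontal geodesics at height m stay in hypo g) and
   contains every X_i, hence C_n, hence cl(C_n) by upper semicontinuity; so
   hbar_y >= m on cl(C_n). *)

Lemma Rbar_glb_correct (E : Rbar -> Prop) : Rbar_is_glb E (Rbar_glb E).
Proof.
  destruct (Rbar_ex_glb E) as [l Hl].
  now rewrite (Rbar_is_glb_unique E l Hl).
Qed.

Lemma finite_family_lower_bound (n : nat) (y : nat -> R) :
  exists m, forall i, (i < n)%nat -> m <= y i.
Proof.
  induction n as [|n [m Hm]].
  - exists 0. intros i Hi. lia.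
  - exists (Rmin m (y n)). intros i Hi.
    destruct (Nat.eq_dec i n) as [->|Hne].
    + apply Rmin_r.
    + eapply Rle_trans; [apply Rmin_l | apply Hm; lia].
Qed.

(* Equality case of the triangle inequality in the Euclidean plane: if the
   first coordinate of the sum may only shrink, it cannot shrink at all. *)
Lemma euclid_triangle_eq_fst (x1 x2 x3 y1 y2 : R) :
  0 <= x1 -> 0 <= x2 -> 0 <= x3 -> x3 <= x1 + x2 ->
  sqrt (x1 ^ 2 + y1 ^ 2) + sqrt (x2 ^ 2 + y2 ^ 2) = sqrt (x3 ^ 2 + (y1 + y2) ^ 2) ->
  x3 = x1 + x2.
Proof.
  intros h1 h2 h3 h4 H.
  assert (sq : forall a b, sqrt (a ^ 2 + b ^ 2) * sqrt (a ^ 2 + b ^ 2) = a ^ 2 + b ^ 2)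
    by (intros; apply sqrt_sqrt; nra).
  pose proof (sq x1 y1) as e1. pose proof (sq x2 y2) as e2.
  pose proof (sq x3 (y1 + y2)) as e3.
  pose proof (sqrt_pos (x1 ^ 2 + y1 ^ 2)) as p1.
  pose proof (sqrt_pos (x2 ^ 2 + y2 ^ 2)) as p2.
  revert e1 e2 e3 p1 p2 H.
  generalize (sqrt (x1 ^ 2 + y1 ^ 2)) (sqrt (x2 ^ 2 + y2 ^ 2))
    (sqrt (x3 ^ 2 + (y1 + y2) ^ 2)).
  intros S1 S2 S3 e1 e2 e3 p1 p2 H.
  assert (cauchy_schwarz : x1 * x2 + y1 * y2 <= S1 * S2).
  { assert ((x1 * x2 + y1 * y2) ^ 2 <= (S1 * S2) ^ 2).
    { replace ((S1 * S2) ^ 2) with ((S1 * S1) * (S2 * S2)) by ring.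
      rewrite e1, e2. pose proof (pow2_ge_0 (x1 * y2 - x2 * y1)). nra. }
    destruct (Rle_lt_dec (x1 * x2 + y1 * y2) 0); [nra|].
    apply Rsqr_incr_0_var; unfold Rsqr; nra. }
  assert (S3 * S3 = (S1 + S2) * (S1 + S2)) by (rewrite <- H; ring).
  nra.
Qed.

Section Geodesics.

Variables (T : Type) (d : T -> T -> R).

Lemma is_geodesic_dist_start x y g t :
  is_geodesic T d x y g -> 0 <= t <= 1 -> d x (g t) = t * d x y.
Proof.
  intros (e0 & _ & hd) Ht. rewrite <- e0 at 1. rewrite hd by lra.
  rewrite Rabs_left1 by lra. ring.
Qed.

Lemma is_geodesic_dist_end x y g t :
  is_geodesic T d x y g -> 0 <= t <= 1 -> d (g t) y = (1 - t) * d x y.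
Proof.
  intros (_ & e1 & hd) Ht. rewrite <- e1 at 1. rewrite hd by lra.
  rewrite Rabs_left1 by lra. ring.
Qed.

Hypothesis Hm : is_metric T d.

Lemma dist_ge0 x y : 0 <= d x y.
Proof. apply Hm. Qed.

Lemma dist_sym x y : d x y = d y x.
Proof. apply Hm. Qed.

Lemma dist_triangle x y z : d x z <= d x y + d y z.
Proof. apply Hm. Qed.

Lemma is_geodesic_rev x y g :
  is_geodesic T d x y g -> is_geodesic T d y x (fun u => g (1 - u)).
Proof.
  intros (h0 & h1 & hd). split; [|split].
  - now replace (1 - 0) with 1 by ring.
  - now replace (1 - 1) with 0 by ring.
  - intros s t Hs Ht. rewrite hd by lra. rewrite dist_sym.
    replace (1 - s - (1 - t)) with (- (s - t)) by ring.
    now rewrite Rabs_Ropp.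
Qed.

Lemma cl_incl (A : T -> Prop) x : A x -> cl T d A x.
Proof.
  intros Ax eps Heps. exists x. split; [exact Ax|].
  replace (d x x) with 0 by (symmetry; now apply Hm). exact Heps.
Qed.

Definition Rbar_indicator (K : T -> Prop) (z : T) : Rbar :=
  if excluded_middle_informative (K z) then p_infty else m_infty.

Lemma usc_indicator_cl (A : T -> Prop) : usc T d (Rbar_indicator (cl T d A)).
Proof.
  intros x c Hlt. unfold Rbar_indicator in Hlt.
  destruct (excluded_middle_informative (cl T d A x)) as [|nCx]; [contradiction|].
  destruct (not_all_ex_not _ _ nCx) as [eps Heps].
  destruct (imply_to_and _ _ Heps) as [Heps0 Hfar].
  exists (eps / 2). split; [lra|]. intros z Hdz. unfold Rbar_indicator.
  destruct (excluded_middle_informative (cl T d A z)) as [Cz|]; [|exact I].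
  destruct (Cz (eps / 2) ltac:(lra)) as (w & Aw & Hw).
  exfalso. apply Hfar. exists w. split; [exact Aw|].
  pose proof (dist_triangle x z w). lra.
Qed.

Lemma usc_ge_on_cl (g : T -> Rbar) (A : T -> Prop) (m : R) :
  usc T d g -> (forall z, A z -> Rbar_le m (g z)) ->
  forall x, cl T d A x -> Rbar_le m (g x).
Proof.
  intros Hu HA x Hx. apply Rbar_not_lt_le. intros Hlt.
  destruct (Hu x m Hlt) as (delta & Hdelta & Hnear).
  destruct (Hx delta Hdelta) as (z & Az & Hz).
  exact (Rbar_lt_not_le _ _ (Hnear z Hz) (HA z Az)).
Qed.

Lemma convex_conv (A : T -> Prop) : convex T d (conv T d A).
Proof.
  intros a b s Ha Hb Hs t Ht S HS HAS.
  exact (HS a b s (Ha S HS HAS) (Hb S HS HAS) Hs t Ht).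
Qed.

Lemma conv_incl (A : T -> Prop) x : A x -> conv T d A x.
Proof. intros Ax S _ HAS. exact (HAS x Ax). Qed.

Hypothesis Hg : is_geodesic_space T d.
Hypothesis Hc : is_CAT0 T d.

(* Moving the start of a geodesic by [d a a'] moves its point at time [t]
   by O(sqrt (d a a')); this is the CAT(0) inequality applied at [s1 t]. *)
Lemma CAT0_dist_geodesics_same_end a a' b s1 s2 t :
  is_geodesic T d a b s1 -> is_geodesic T d a' b s2 -> 0 <= t <= 1 ->
  d (s1 t) (s2 t) ^ 2 <= d a a' * (4 * d a b + d a a').
Proof.
  intros G1 G2 Ht.
  pose proof (Hc a' b (s1 t) s2 t G2 Ht) as C.
  pose proof (is_geodesic_dist_start _ _ _ _ G1 Ht) as da.
  rewrite (is_geodesic_dist_end _ _ _ _ G1 Ht) in C.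
  assert (da' : d (s1 t) a' <= t * d a b + d a a').
  { rewrite <- da, (dist_sym a). apply dist_triangle. }
  pose proof (dist_triangle a a' b) as dab.
  pose proof (dist_ge0 a b) as HA. pose proof (dist_ge0 a' b) as HB.
  pose proof (dist_ge0 a a') as Hdel. pose proof (dist_ge0 (s1 t) a') as HX0.
  revert C da' dab HA HB Hdel HX0.
  generalize (d a b) (d a' b) (d a a') (d (s1 t) a') (d (s1 t) (s2 t)).
  intros A B del X0 D C da' dab HA HB Hdel HX0.
  assert (AB : A ^ 2 - B ^ 2 <= 2 * A * del).
  { destruct (Rle_lt_dec A B); [nra|].
    assert ((A - B) * (A + B) <= del * (A + B)) by (apply Rmult_le_compat_r; lra).
    nra. }
  assert ((1 - t) * X0 ^ 2 <= (1 - t) * (t * A + del) ^ 2)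
    by (apply Rmult_le_compat_l; nra).
  assert (t * (1 - t) * (A ^ 2 - B ^ 2) <= t * (1 - t) * (2 * A * del))
    by (apply Rmult_le_compat_l; nra).
  assert (0 <= t * A * del) by (apply Rmult_le_pos; [apply Rmult_le_pos|]; lra).
  assert ((1 - t) * (4 * t * A * del + del ^ 2) <= 4 * A * del + del ^ 2) by nra.
  nra.
Qed.

Lemma convex_cl (K : T -> Prop) : convex T d K -> convex T d (cl T d K).
Proof.
  intros HK a b s Ha Hb Hs t Ht eps Heps.
  pose proof (dist_ge0 a b) as HA. set (A := d a b) in *.
  set (r := Rmin 1 (eps ^ 2 / (4 * (4 * A + 5)))).
  assert (Hr : 0 < r).
  { apply Rmin_pos; [lra|]. apply Rdiv_lt_0_compat; [apply pow_lt | ]; lra. }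
  assert (Hr1 : r <= 1) by apply Rmin_l.
  assert (Hr2 : r * (4 * A + 5) <= eps ^ 2 / 4).
  { assert (Hle : r <= eps ^ 2 / (4 * (4 * A + 5))) by apply Rmin_r.
    apply Rmult_le_compat_r with (r := 4 * A + 5) in Hle; [|lra].
    replace (eps ^ 2 / (4 * (4 * A + 5)) * (4 * A + 5)) with (eps ^ 2 / 4) in Hle
      by (field; lra).
    exact Hle. }
  destruct (Ha r Hr) as (a' & Ka' & Ha').
  destruct (Hb r Hr) as (b' & Kb' & Hb').
  destruct (Hg a' b) as (u & Gu).
  destruct (Hg a' b') as (s' & Gs').
  exists (s' t). split; [exact (HK a' b' s' Ka' Kb' Gs' t Ht)|].
  (* go from [s t] to [s' t] through [u t], perturbing one endpoint at a time *)
  pose proof (CAT0_dist_geodesics_same_end a a' b s u t Hs Gu Ht) as E1.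
  pose proof (CAT0_dist_geodesics_same_end b b' a' _ _ (1 - t)
    (is_geodesic_rev _ _ _ Gu) (is_geodesic_rev _ _ _ Gs') ltac:(lra)) as E2.
  cbv beta in E2. replace (1 - (1 - t)) with t in E2 by ring.
  assert (Hba' : d b a' <= A + d a a').
  { pose proof (dist_triangle b a a'). rewrite (dist_sym b a) in *. unfold A. lra. }
  pose proof (dist_ge0 a a'). pose proof (dist_ge0 b b'). pose proof (dist_ge0 b a').
  pose proof (dist_ge0 (s t) (u t)). pose proof (dist_ge0 (u t) (s' t)).
  assert (d (s t) (u t) ^ 2 < eps ^ 2 / 4) by (fold A in E1; nra).
  assert (d (u t) (s' t) ^ 2 < eps ^ 2 / 4) by nra.
  assert (d (s t) (u t) < eps / 2) by nra.
  assert (d (u t) (s' t) < eps / 2) by nra.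
  pose proof (dist_triangle (s t) (u t) (s' t)). lra.
Qed.

(* In a CAT(0) space, a point metrically between [a] and [b] is the point
   of the geodesic at time [d a z / d a b]: the comparison inequality
   degenerates to [d z (g t) ^ 2 <= 0]. *)
Lemma convex_between (K : T -> Prop) a b z :
  convex T d K -> K a -> K b -> d a z + d z b = d a b -> K z.
Proof.
  intros HK Ka Kb E.
  pose proof (dist_ge0 a z). pose proof (dist_ge0 z b).
  destruct (Req_dec (d a b) 0) as [A0|A0].
  - assert (Haz : d a z = 0) by lra. apply Hm in Haz. now subst z.
  - assert (Apos : 0 < d a b) by (pose proof (dist_ge0 a b); lra).
    destruct (Hg a b) as (g & G).
    set (t := d a z / d a b).
    assert (Hdaz : d a z = t * d a b) by (unfold t; field; lra).
    assert (Ht : 0 <= t <= 1) by (split; nra).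
    pose proof (Hc a b z g t G Ht) as C.
    rewrite (dist_sym z a), Hdaz in C.
    replace (d z b) with (d a b - t * d a b) in C by lra.
    replace ((1 - t) * (t * d a b) ^ 2 + t * (d a b - t * d a b) ^ 2 -
        t * (1 - t) * d a b ^ 2) with 0 in C by ring.
    assert (Hz : d z (g t) = 0) by (pose proof (dist_ge0 z (g t)); nra).
    apply Hm in Hz. rewrite Hz. exact (HK a b g Ka Kb G t Ht).
Qed.

End Geodesics.

Section Product.

Variables (T : Type) (d : T -> T -> R).
Hypothesis Hm : is_metric T d.

Lemma prod_geodesic_fst_between (P Q : T * R) p t :
  is_geodesic (T * R) (prod_dist d) P Q p -> 0 <= t <= 1 ->
  d (fst P) (fst (p t)) + d (fst (p t)) (fst Q) = d (fst P) (fst Q).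
Proof.
  intros G Ht.
  assert (S : prod_dist d P (p t) + prod_dist d (p t) Q = prod_dist d P Q).
  { rewrite (is_geodesic_dist_start _ _ _ _ _ _ G Ht),
      (is_geodesic_dist_end _ _ _ _ _ _ G Ht). ring. }
  destruct P as (a, s), Q as (b, u), (p t) as (z, r).
  unfold prod_dist in S; simpl in S |- *.
  symmetry. apply (euclid_triangle_eq_fst _ _ _ (s - r) (r - u));
    try apply dist_ge0; try apply dist_triangle; auto.
  now replace (s - r + (r - u)) with (s - u) by ring.
Qed.

Lemma prod_geodesic_horizontal a b g (m : R) :
  is_geodesic T d a b g ->
  is_geodesic (T * R) (prod_dist d) (a, m) (b, m) (fun u => (g u, m)).
Proof.
  intros (e0 & e1 & hd). split; [|split].
  - now rewrite e0.
  - now rewrite e1.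
  - intros s t Hs Ht. unfold prod_dist. cbn [fst snd]. rewrite hd by auto.
    replace (m - m) with 0 by ring. rewrite !pow_i, !Rplus_0_r by lia.
    rewrite <- !Rsqr_pow2, !sqrt_Rsqr; auto using dist_ge0.
    apply Rmult_le_pos; [apply Rabs_pos | apply dist_ge0; auto].
Qed.

Lemma concave_superlevel_convex (g : T -> Rbar) (m : R) :
  concave d g -> convex T d (fun w => Rbar_le m (g w)).
Proof.
  intros Hcc a b s Ha Hb Hs t Ht.
  exact (Hcc (a, m) (b, m) _ Ha Hb (prod_geodesic_horizontal a b s m Hs) t Ht).
Qed.

Lemma concave_indicator (K : T -> Prop) :
  is_geodesic_space T d -> is_CAT0 T d -> convex T d K ->
  concave d (Rbar_indicator T K).
Proof.
  intros Hg Hc HK P Q p HP HQ Hp t Ht. unfold Defs.hypo, Rbar_indicator in *.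
  destruct (excluded_middle_informative (K (fst P))) as [KP|]; [|contradiction].
  destruct (excluded_middle_informative (K (fst Q))) as [KQ|]; [|contradiction].
  destruct (excluded_middle_informative (K (fst (p t)))) as [|nK]; [exact I|].
  apply nK, (convex_between T d Hm Hg Hc K (fst P) (fst Q)); auto.
  exact (prod_geodesic_fst_between P Q p t Hp Ht).
Qed.

End Product.

Section Hull.

Variables (T : Type) (d : T -> T -> R) (n : nat) (X : nat -> T) (y : nat -> R).

Lemma hbar_le (g : T -> Rbar) x :
  usc T d g -> concave d g -> majorizes_fy n X y g -> Rbar_le (hbar d n X y x) (g x).
Proof.
  intros Hu Hcc Hmaj. apply (Rbar_glb_correct _). now exists g.
Qed.

Lemma hbar_ge (m : Rbar) x :
  (forall g, usc T d g -> concave d g -> majorizes_fy n X y g -> Rbar_le m (g x)) ->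
  Rbar_le m (hbar d n X y x).
Proof.
  intros Hg. apply (Rbar_glb_correct _). intros v (g & Hu & Hcc & Hmaj & ->).
  now apply Hg.
Qed.

End Hull.

Theorem lemma15 (T : Type) (d : T -> T -> R) (HT : is_Hadamard T d)
  (n : nat) (X : nat -> T) (y : nat -> R) :
  forall x : T,
    Rbar_lt m_infty (hbar d n X y x) <-> cl T d (conv T d (pts n X)) x.
Proof.
  intros x. destruct HT as (Hm & _ & Hg & Hc).
  set (C := cl T d (conv T d (pts n X))).
  split.
  - intros Hx. apply NNPP. intros HnC.
    assert (Hle : Rbar_le (hbar d n X y x) (Rbar_indicator T C x)).
    { apply hbar_le.
      - apply usc_indicator_cl, Hm.
      - apply concave_indicator; auto. apply convex_cl; auto. apply convex_conv.
      - intros i Hi. unfold Rbar_indicator.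
        destruct (excluded_middle_informative (C (X i))) as [|nC]; [exact I|].
        exfalso. apply nC, cl_incl, conv_incl; [exact Hm|]. now exists i. }
    unfold Rbar_indicator in Hle.
    destruct (excluded_middle_informative (C x)); [contradiction|].
    destruct (hbar d n X y x); simpl in *; auto.
  - intros Hx. destruct (finite_family_lower_bound n y) as [m Hmy].
    assert (Hle : Rbar_le m (hbar d n X y x)).
    { apply hbar_ge. intros g Hu Hcc Hmaj.
      apply (usc_ge_on_cl T d g (conv T d (pts n X)) m Hu); [|exact Hx].
      intros z Hz. apply Hz; [now apply concave_superlevel_convex|].
      intros w (i & Hi & ->). eapply Rbar_le_trans; [|exact (Hmaj i Hi)].
      simpl. auto. }
    destruct (hbar d n X y x); simpl in *; auto.
Qed.
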